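(* Let $n\ge 1$, $1\le d\le n$, and let $\mathcal{A}\subseteq\{0,1\}^n$ be nonempty. Then \[ A(n,d;\mathcal{A})\le \big(\mathrm{OPT}(\mathsf{Del}(n,d;\mathcal{A}))\big)^{1/2}. \]
   Context: Fourier transform: $\widehat{f}(\mathbf{s})=2^{-n}\sum_{\mathbf{x}\in\{0,1\}^n}f(\mathbf{x})(-1)^{\mathbf{x}\cdot\mathbf{s}}$. Convolution: $(f\star g)(\mathbf{x})=2^{-n}\sum_{\mathbf{z}\in\{0,1\}^n}f(\mathbf{z})g(\mathbf{x}+\mathbf{z})$, with addition over $\mathbb{F}_2^n$. $w(\mathbf{x})$ is the Hamming weight, $d(\cdot,\cdot)$ the Hamming distance; the minimum distance of a code (nonempty subset of $\{0,1\}^n$) is the minimum distance between distinct codewords (taken as $+\infty$ for a single codeword). $A(n,d;\mathcal{A})$ is the maximum of $|\mathcal{C}|$ over codes $\mathcal{C}\subseteq\mathcal{A}$ of minimum distance at least $d$. For an LP $\mathsf{L}$, $\mathrm{OPT}(\mathsf{L})$ is its optimal value. $\mathsf{Del}(n,d)$ is the LP: maximize $\sum_{\mathbf{x}}f(\mathbf{x})$ over $f:\{0,1\}^n\to\mathbb{R}$ subject to (C1) $f(\mathbf{x})\ge0$ for all $\mathbf{x}$; (C2) $\widehat f(\mathbf{s})\ge0$ for all $\mathbf{s}$; (C3) $f(\mathbf{x})=0$ whenever $1\le w(\mathbf{x})\le d-1$; (C4) $f(0^n)=1$. $\mathsf{Del}(n,d;\mathcal{A})$ is the LP: maximize $\sum_{\mathbf{x}}f(\mathbf{x})$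 over $f:\{0,1\}^n\to\mathbb{R}$ subject to (D1) $f(\mathbf{x})\ge 0$ for all $\mathbf{x}$; (D2) $\widehat f(\mathbf{s})\ge0$ for all $\mathbf{s}$; (D3) $f(\mathbf{x})=0$ whenever $1\le w(\mathbf{x})\le d-1$; (D4) $f(0^n)\le\mathrm{OPT}(\mathsf{Del}(n,d))$; (D5) $f(\mathbf{x})\le 2^n(\mathds{1}_{\mathcal{A}}\star\mathds{1}_{\mathcal{A}})(\mathbf{x})=\sum_{\mathbf{z}}\mathds{1}_{\mathcal{A}}(\mathbf{z})\mathds{1}_{\mathcal{A}}(\mathbf{x}+\mathbf{z})$ for all $\mathbf{x}$. *)

From HB Require Import structures.
From mathcomp Require Import all_boot all_order all_algebra.
From mathcomp Require Import classical_sets reals.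
Set Implicit Arguments. Unset Strict Implicit. Unset Printing Implicit Defensive.
Import Order.TTheory GRing.Theory Num.Theory.
Local Open Scope ring_scope.

Definition word (n : nat) := {ffun 'I_n -> bool}.

Definition wadd n (x y : word n) : word n := [ffun i => x i (+) y i].

Definition wzero n : word n := [ffun _ => false].

Definition wt n (x : word n) : nat := #|[pred i | x i]|.
Definition hdist n (x y : word n) : nat := wt (wadd x y).

Definition wdot n (x s : word n) : bool := odd #|[pred i | x i && s i]|.

Definition fourier (R : realType) n (f : word n -> R) (s : word n) : R :=
  (2 ^+ n)^-1 * \sum_(x : word n) f x * (-1) ^+ wdot x s.

Definition conv (R : realType) n (f g : word n -> R) (x : word n) : R :=
  (2 ^+ n)^-1 * \sum_(z : word n) f z * g (wadd x z).

Definition indic (R : realType) n (A : {set word n}) (x : word n) : R :=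
  (x \in A)%:R.

(* C has minimum distance at least d (vacuous for |C| <= 1, i.e. +oo) *)
Definition min_dist_ge n (C : {set word n}) (d : nat) : bool :=
  [forall x in C, forall y in C, (x != y) ==> (d <= hdist x y)%N].

Definition A_code n (d : nat) (A : {set word n}) : nat :=
  \max_(C : {set word n} | (C \subset A) && min_dist_ge C d) #|C|.

Definition OPT (R : realType) n (feas : (word n -> R) -> Prop) : R :=
  sup [set \sum_(x : word n) f x | f in feas].

Definition Del_feas (R : realType) n (d : nat) (f : word n -> R) : Prop :=
  [/\ (forall x, 0 <= f x),
      (forall s, 0 <= fourier f s),
      (forall x, (1 <= wt x)%N -> (wt x <= d - 1)%N -> f x = 0)
    & f (wzero n) = 1].

Definition OPT_Del (R : realType) n d : R := OPT (@Del_feas R n d).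

Definition DelA_feas (R : realType) n (d : nat) (A : {set word n})
    (f : word n -> R) : Prop :=
  [/\ (forall x, 0 <= f x),
      (forall s, 0 <= fourier f s),
      (forall x, (1 <= wt x)%N -> (wt x <= d - 1)%N -> f x = 0),
      f (wzero n) <= OPT_Del R n d
    & (forall x, f x <= 2 ^+ n * conv (indic R A) (indic R A) x)].

Definition OPT_DelA (R : realType) n d (A : {set word n}) : R :=
  OPT (@DelA_feas R n d A).

From HB Require Import structures.
From mathcomp Require Import all_boot all_order all_algebra.
From mathcomp Require Import classical_sets reals.
From mathcomp Require Import zify.
Set Implicit Arguments. Unset Strict Implicit. Unset Printing Implicit Defensive.
Import Order.TTheory GRing.Theory Num.Theory.
Local Open Scope ring_scope.

(* For a code C, its distance distribution (autocorrelation)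
     dd C x = #{(c, c') in C^2 | c + c' = x}
   is nonnegative, satisfies dd C 0 = |C| and sum_x dd C x = |C|^2, and its
   Fourier transform is 2^-n (sum_(c in C) (-1)^(c.s))^2 >= 0.  It vanishes on
   weights 1..d-1 when C has minimum distance >= d, and dd C <= 2^n 1_A * 1_A
   when C is contained in A.  Hence dd C / |C| is feasible for Del(n,d), so
   |C| <= OPT(Del(n,d)) (the LP is bounded by 2^n by Fourier inversion), and
   then dd C itself is feasible for Del(n,d;A), so |C|^2 <= OPT(Del(n,d;A)).
   Applying this to an optimal code and taking square roots gives the theorem. *)

Lemma waddC n (x y : word n) : wadd x y = wadd y x.
Proof. by apply/ffunP => i; rewrite !ffunE addbC. Qed.

Lemma waddA n (x y z : word n) : wadd x (wadd y z) = wadd (wadd x y) z.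
Proof. by apply/ffunP => i; rewrite !ffunE addbA. Qed.

Lemma waddxx n (x : word n) : wadd x x = wzero n.
Proof. by apply/ffunP => i; rewrite !ffunE addbb. Qed.

Lemma wadd0 n (x : word n) : wadd (wzero n) x = x.
Proof. by apply/ffunP => i; rewrite !ffunE. Qed.

Lemma wadd_eq n (x y z : word n) : (wadd x y == z) = (y == wadd z x).
Proof.
apply/eqP/eqP => [<-|->]; first by rewrite waddC waddA waddxx wadd0.
by rewrite [wadd z x]waddC waddA waddxx wadd0.
Qed.

Lemma card_word n : #|{: word n}| = (2 ^ n)%N.
Proof. by rewrite card_ffun card_bool card_ord. Qed.

Lemma card_pred_sum (I : finType) (p : pred I) : #|[pred i | p i]| = (\sum_i p i)%N.
Proof. by rewrite -sum1_card big_mkcond; apply: eq_bigr => i _; rewrite inE; case: (p i). Qed.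

(* Parity of a count is additive under xor of the predicates: the key fact
   making x |-> (-1)^(x.s) a character. *)
Lemma odd_card_xor (I : finType) (a b c : pred I) :
  odd #|[pred i | a i && (b i (+) c i)]| =
  odd #|[pred i | a i && b i]| (+) odd #|[pred i | a i && c i]|.
Proof.
have count_eq : (#|[pred i | a i && (b i (+) c i)]|
                 + (#|[pred i | a i && b i && c i]|).*2)%N
                = (#|[pred i | a i && b i]| + #|[pred i | a i && c i]|)%N.
  rewrite !card_pred_sum -addnn -!big_split /=.
  by apply: eq_bigr => i _; case: (a i); case: (b i); case: (c i).
by rewrite -oddD -count_eq oddD odd_double addbF.
Qed.

Lemma wdotC n (x s : word n) : wdot x s = wdot s x.
Proof. by rewrite /wdot; congr odd; apply: eq_card => i; rewrite !inE andbC. Qed.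

Lemma wdotDr n (x s t : word n) : wdot x (wadd s t) = wdot x s (+) wdot x t.
Proof. by rewrite /wdot -odd_card_xor; congr odd; apply: eq_card => i; rewrite !inE ffunE. Qed.

Lemma wdot0r n (x : word n) : wdot x (wzero n) = false.
Proof. by rewrite /wdot (_ : #|_| = 0%N) //; apply: eq_card0 => i; rewrite !inE ffunE andbF. Qed.

Lemma sign_xor (R : pzRingType) (a b : bool) : (-1) ^+ (a (+) b) = (-1) ^+ a * (-1) ^+ b :> R.
Proof. by case: a; case: b; rewrite /= ?expr0 ?expr1 ?mulr1 ?mul1r ?mulrNN ?mulr1. Qed.

(* Orthogonality of characters: sum_s (-1)^(x.s) is 2^n at x = 0 and 0 otherwise.
   For x <> 0, translating s by a unit vector e with x.e = 1 negates the sum. *)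
Lemma char_sum (R : numDomainType) n (x : word n) :
  \sum_(s : word n) (-1) ^+ wdot x s = if x == wzero n then 2 ^+ n else 0 :> R.
Proof.
case: eqP => [->|/eqP x_neq0].
  under eq_bigr do rewrite wdotC wdot0r expr0.
  by rewrite sumr_const card_word natrX.
have [i xi] : exists i, x i.
  apply/existsP; apply: contraR x_neq0 => /existsPn x_false.
  by apply/eqP/ffunP => i; rewrite ffunE; apply/negbTE/x_false.
pose e : word n := [ffun j => j == i].
have x_dot_e : wdot x e.
  rewrite /wdot (_ : #|_| = 1%N) // -(card1 i); apply: eq_card => j.
  by rewrite !inE ffunE; case: eqP => [->|]; rewrite ?xi ?andbF ?andbT.
have shift_inj : injective (fun s => wadd s e).
  by apply: (can_inj (g := fun s => wadd s e)) => s; rewrite -waddA waddxx waddC wadd0.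
set S := \sum_s _.
have S_opp : S = - S.
  rewrite {1}/S (reindex_inj shift_inj) /= -sumrN; apply: eq_bigr => s _.
  by rewrite wdotDr x_dot_e sign_xor expr1 mulrN1.
have : S *+ 2 == 0 by rewrite mulr2n {1}S_opp addNr.
by rewrite mulrn_eq0 => /eqP.
Qed.

Section Fourier.
Variables (R : realType) (n : nat).
Implicit Types (f : word n -> R).

Lemma two_exp_neq0 : (2 ^+ n : R) != 0.
Proof. by rewrite expf_neq0 // pnatr_eq0. Qed.

Lemma fourier_sum f : \sum_s fourier f s = f (wzero n).
Proof.
rewrite /fourier -mulr_sumr exchange_big /=.
under eq_bigr do rewrite -mulr_sumr char_sum.
rewrite (bigD1 (wzero n)) //= eqxx big1 => [|x /negbTE ->]; last by rewrite mulr0.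
by rewrite addr0 mulrC -mulrA divff ?mulr1 // two_exp_neq0.
Qed.

Lemma sum_fourier0 f : \sum_x f x = 2 ^+ n * fourier f (wzero n).
Proof.
rewrite /fourier mulrA divff ?two_exp_neq0 // mul1r.
by apply: eq_bigr => x _; rewrite wdot0r mulr1.
Qed.

Lemma fourierZ (k : R) f s : fourier (fun x => k * f x) s = k * fourier f s.
Proof.
rewrite /fourier mulrCA; congr (_ * _).
by rewrite mulr_sumr; apply: eq_bigr => x _; rewrite mulrA.
Qed.

(* Del(n,d) is bounded: a feasible f has sum f = 2^n hat f(0) <= 2^n sum_s hat f(s)
   = 2^n f(0) = 2^n. *)
Lemma Del_feas_bound d f : Del_feas d f -> \sum_x f x <= 2 ^+ n.
Proof.
case=> _ fourier_ge0 _ f0.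
rewrite sum_fourier0 -{2}(mulr1 (2 ^+ n)) ler_wpM2l ?exprn_ge0 //.
by rewrite -f0 -(fourier_sum f) (bigD1 (wzero n)) //= lerDl sumr_ge0.
Qed.

End Fourier.

Lemma le_OPT (R : realType) n (feas : (word n -> R) -> Prop) (B : R) f :
  (forall h, feas h -> \sum_x h x <= B) -> feas f -> \sum_x f x <= OPT feas.
Proof.
move=> bounded feas_f; apply: ub_le_sup; last by exists f.
by exists B => _ [h feas_h <-]; apply: bounded.
Qed.

Lemma sum_delta (R : pzRingType) (T : finType) (y : T) (h : T -> R) :
  \sum_x (y == x)%:R * h x = h y.
Proof.
rewrite (bigD1 y) //= eqxx mul1r big1 ?addr0 // => x /negbTE.
by rewrite eq_sym => ->; rewrite mul0r.
Qed.

Lemma sum_in_delta (R : pzRingType) (T : finType) (C : {set T}) (y : T) :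
  \sum_(c in C) (c == y)%:R = (y \in C)%:R :> R.
Proof.
case: (boolP (y \in C)) => yC.
  by rewrite (bigD1 y) //= eqxx big1 ?addr0 // => x /andP[_ /negbTE ->].
by rewrite big1 // => x xC; case: eqP => // exy; rewrite -exy xC in yC.
Qed.

Section DistanceDistribution.
Variables (R : realType) (n : nat) (C : {set word n}).

Definition dd (x : word n) : R :=
  \sum_(c in C) \sum_(c' in C) (wadd c c' == x)%:R.

Lemma dd_translates x : dd x = \sum_(c in C) (wadd x c \in C)%:R.
Proof.
by apply: eq_bigr => c _; rewrite -sum_in_delta; apply: eq_bigr => c' _; rewrite wadd_eq.
Qed.

Lemma dd_ge0 x : 0 <= dd x.
Proof. by do 2! (apply: sumr_ge0 => ? _); rewrite ler0n. Qed.

Lemma dd0 : dd (wzero n) = #|C|%:R.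
Proof.
by rewrite dd_translates (eq_bigr (fun _ => 1)) ?sumr_const // => c cC; rewrite wadd0 cC.
Qed.

Lemma dd_sum : \sum_x dd x = (#|C| ^ 2)%:R.
Proof.
have each_pair (y : word n) : \sum_x (y == x)%:R = 1 :> R.
  by rewrite -[RHS](sum_delta y (fun _ => 1)); apply: eq_bigr => *; rewrite mulr1.
rewrite /dd exchange_big /=.
under eq_bigr do rewrite exchange_big /=.
rewrite (eq_bigr (fun _ => #|C|%:R)) => [|c _]; last first.
  by rewrite (eq_bigr (fun _ => 1)) ?sumr_const // => c' _; rewrite each_pair.
by rewrite sumr_const expnS expn1 natrM mulr_natr.
Qed.

Lemma dd_fourier s :
  fourier dd s = (2 ^+ n)^-1 * (\sum_(c in C) (-1) ^+ wdot c s) ^+ 2.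
Proof.
rewrite /fourier; congr (_ * _).
transitivity (\sum_(c in C) \sum_(c' in C) (-1) ^+ wdot (wadd c c') s :> R).
  under eq_bigr => x _.
    rewrite /dd mulr_suml; under eq_bigr do rewrite mulr_suml.
    over.
  rewrite exchange_big; apply: eq_bigr => c _ /=.
  by rewrite exchange_big; apply: eq_bigr => c' _ /=; apply: sum_delta.
rewrite expr2 mulr_suml; apply: eq_bigr => c _; rewrite mulr_sumr.
by apply: eq_bigr => c' _; rewrite wdotC wdotDr sign_xor ![wdot s _]wdotC.
Qed.

Lemma dd_fourier_ge0 s : 0 <= fourier dd s.
Proof. by rewrite dd_fourier mulr_ge0 ?sqr_ge0 // invr_ge0 exprn_ge0. Qed.

Lemma dd_gap d x : min_dist_ge C d ->
  (1 <= wt x)%N -> (wt x <= d - 1)%N -> dd x = 0.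
Proof.
move=> /forallP C_dist wt_pos wt_small.
rewrite /dd big1 // => c cC; rewrite big1 // => c' c'C.
case: eqP => // sum_x; exfalso.
have [eq_cc'|neq_cc'] := eqVneq c c'.
  move: wt_pos; rewrite -sum_x eq_cc' waddxx /wt (_ : #|_| = 0%N) //.
  by apply: eq_card0 => i; rewrite !inE ffunE.
move: (C_dist c); rewrite cC => /forallP /(_ c'); rewrite c'C neq_cc' /= /hdist sum_x.
by move: wt_pos wt_small; lia.
Qed.

(* Counting pairs in C is dominated by counting pairs in A. *)
Lemma dd_le_conv (A : {set word n}) x :
  C \subset A -> dd x <= 2 ^+ n * conv (indic R A) (indic R A) x.
Proof.
move=> /fintype.subsetP CA.
rewrite /conv mulrA divff ?two_exp_neq0 // mul1r dd_translates big_mkcond /=.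
apply: ler_sum => z _; rewrite /indic.
have [zC|_] := boolP (z \in C); last by rewrite mulr_ge0 ?ler0n.
rewrite (CA z zC) mul1r; have [xzC|_] := boolP (wadd x z \in C); last by rewrite ler0n.
by rewrite (CA _ xzC).
Qed.

Hypothesis C_nonempty : (0 < #|C|)%N.

Let card_neq0 : (#|C|%:R : R) != 0.
Proof. by rewrite pnatr_eq0 -lt0n. Qed.

(* dd / |C| is feasible for Del(n,d) with value |C|: Delsarte's LP bound. *)
Lemma code_le_OPT_Del d : min_dist_ge C d -> #|C|%:R <= OPT_Del R n d.
Proof.
move=> C_dist; rewrite /OPT_Del.
have -> : #|C|%:R = \sum_x (#|C|%:R)^-1 * dd x.
  by rewrite -mulr_sumr dd_sum natrX expr2 mulrA mulVf ?mul1r.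
apply: (le_OPT (@Del_feas_bound R n d)); split.
- by move=> x; rewrite mulr_ge0 ?dd_ge0 // invr_ge0 ler0n.
- by move=> s; rewrite fourierZ mulr_ge0 ?dd_fourier_ge0 // invr_ge0 ler0n.
- by move=> x wt_pos wt_small; rewrite (dd_gap C_dist wt_pos wt_small) mulr0.
- by rewrite dd0 mulVf.
Qed.

(* dd itself is feasible for Del(n,d;A) with value |C|^2. *)
Lemma code_sq_le_OPT_DelA d (A : {set word n}) :
  C \subset A -> min_dist_ge C d -> (#|C| ^ 2)%:R <= OPT_DelA R d A.
Proof.
move=> CA C_dist; rewrite -dd_sum.
apply: (le_OPT (B := \sum_x 2 ^+ n * conv (indic R A) (indic R A) x)).
  by move=> h [_ _ _ _ h_le]; apply: ler_sum => x _; apply: h_le.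
split.
- exact: dd_ge0.
- exact: dd_fourier_ge0.
- by move=> x; apply: dd_gap.
- by rewrite dd0 code_le_OPT_Del.
- by move=> x; apply: dd_le_conv.
Qed.

End DistanceDistribution.

Theorem mainTheorem2 (R : realType) (n d : nat) (A : {set word n}) :
  (1 <= n)%N -> (1 <= d)%N -> (d <= n)%N -> A != finset.set0 ->
  (A_code d A)%:R <= Num.sqrt (OPT_DelA R d A).
Proof.
move=> _ _ _ _.
pose admissible := [pred C : {set word n} | (C \subset A) && min_dist_ge C d].
have admissible_nonempty : (0 < #|admissible|)%N.
  apply/card_gt0P; exists finset.set0; rewrite inE finset.sub0set.
  by apply/forallP => x; rewrite finset.in_set0.
have [C0 C0_adm C0_opt] := eq_bigmax_cond (fun C : {set word n} => #|C|) admissible_nonempty.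
rewrite (_ : A_code d A = #|C0|) //; move: C0_adm; rewrite inE => /andP[C0A C0_dist].
have [->|C0_nonempty] := posnP #|C0|; first by rewrite sqrtr_ge0.
have C0_sq_le := code_sq_le_OPT_DelA R C0_nonempty C0A C0_dist.
rewrite -(ger0_norm (ler0n R #|C0|)) -sqrtr_sqr ler_sqrt -?natrX //.
exact: le_trans (ler0n _ _) C0_sq_le.
Qed.
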